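(* Let $a,c,p\in\mathbb{C}$ with $-c\notin\mathbb{N}\cup\{0\}$. Define sequences $(u_n)_{n\ge0}$ and $(v_n)_{n\ge0}$ by $u_0=1$, $u_1=\frac{a}{c}+p$, $v_0=1$, $v_1=\frac{a}{c}-p$ and, for all integers $n\ge1$, \[ u_{n+1}=\frac{a+p(c+2n)+n}{(n+1)(c+n)}u_n-\frac{p(p+1)}{(n+1)(c+n)}u_{n-1}, \] \[ v_{n+1}=\frac{a-p(c+2n)+n}{(n+1)(c+n)}v_n-\frac{(p-1)p}{(n+1)(c+n)}v_{n-1}. \] Then \[ \sinh(pz)\,M(a,c;z)=\sum_{n=0}^\infty\frac{u_n-v_n}{2}z^n,\qquad z\in\mathbb{C}. \]
   Context: For $a\in\mathbb{C}$, $(a)_n=a(a+1)\cdots(a+n-1)$ denotes the Pochhammer symbol, with $(a)_0=1$. For $a,c\in\mathbb{C}$ with $-c\notin\mathbb{N}\cup\{0\}$, the confluent hypergeometric (Kummer) function is $M(a,c;z)=\sum_{n=0}^\infty \frac{(a)_n}{(c)_n\,n!}z^n$, $z\in\mathbb{C}$. *)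

From Stdlib Require Import Reals Factorial.
From Coquelicot Require Import Coquelicot.
Open Scope C_scope.

(* Sum of a complex series (componentwise Coquelicot [Series]; equals the
   true sum whenever the series converges). *)
Definition CSeries (f : nat -> C) : C :=
  (Series (fun n => Re (f n)), Series (fun n => Im (f n))).

Fixpoint poch (a : C) (n : nat) : C :=
  match n with
  | O => 1
  | S k => poch a k * (a + INR k)
  end.

(* Kummer's confluent hypergeometric function M(a,c;z) as the sum of its
   power series (the series converges for every z when -c is not in N u {0}). *)
Definition kummerM (a c z : C) : C :=
  CSeries (fun n : nat => poch a n / (poch c n * INR (Factorial.fact n)) * z ^ n).

Definition cexp (z : C) : C := CSeries (fun n : nat => z ^ n / INR (Factorial.fact n)).
Definition csinh (z : C) : C := (cexp z - cexp (- z)) / 2.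

(* Three-term recurrence: rec x0 x1 A B n = x_n where
   x_0 = x0, x_1 = x1, x_{m+1} = A m * x_m - B m * x_{m-1} for m >= 1. *)
Fixpoint rec_pair (x0 x1 : C) (A B : nat -> C) (n : nat) : C * C :=
  match n with
  | O => (x0, x1)
  | S k => let (x, y) := rec_pair x0 x1 A B k in
           (y, A (S k) * y - B (S k) * x)
  end.
Definition rec3 (x0 x1 : C) (A B : nat -> C) (n : nat) : C :=
  fst (rec_pair x0 x1 A B n).

Definition u_seq (a c p : C) : nat -> C :=
  rec3 1 (a / c + p)
    (fun n => (a + p * (c + 2 * INR n) + INR n) / (INR (n + 1) * (c + INR n)))
    (fun n => p * (p + 1) / (INR (n + 1) * (c + INR n))).

Definition v_seq (a c p : C) : nat -> C :=
  rec3 1 (a / c - p)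
    (fun n => (a - p * (c + 2 * INR n) + INR n) / (INR (n + 1) * (c + INR n)))
    (fun n => (p - 1) * p / (INR (n + 1) * (c + INR n))).

From Stdlib Require Import Reals Lia Lra Factorial.
From Coquelicot Require Import Coquelicot.
Open Scope C_scope.

(* The u_n and v_n are the Taylor coefficients of M(a,c;z) e^{pz} and
   M(a,c;z) e^{-pz}.  Indeed, the Cauchy product
   w_n = sum_k (a)_k / ((c)_k k!) * q^(n-k) / (n-k)!  satisfies the three-term
   recurrence with q = p (resp. q = -p): split (n+1)(n+c) as
   k(k+c-1) + (n+1-k)(n+k+c) and use the first-order recurrences of the
   Kummer and exponential coefficients.  Both series converge absolutely, so
   the Cauchy product theorem identifies the generating function of w_n with
   M(a,c;z) e^{qz}, and sinh(pz) M(a,c;z) is the half-difference. *)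

(* Coquelicot states these at the carrier of [C_AbelianMonoid]; restating them
   at type [C] lets [ring] and [field] see the equalities. *)
Lemma sum_n_C_S (f : nat -> C) n : sum_n f (S n) = sum_n f n + f (S n) :> C.
Proof. exact (sum_Sn f n). Qed.

Lemma sum_n_C_plus (f g : nat -> C) n :
  sum_n (fun k => f k + g k) n = sum_n f n + sum_n g n :> C.
Proof. exact (sum_n_plus f g n). Qed.

Lemma sum_n_C_mult_l (x : C) (f : nat -> C) n :
  sum_n (fun k => x * f k) n = x * sum_n f n :> C.
Proof. exact (sum_n_mult_l x f n). Qed.

Lemma sum_n_C_ext_loc (f g : nat -> C) n :
  (forall k, (k <= n)%nat -> f k = g k) -> sum_n f n = sum_n g n :> C.
Proof. exact (sum_n_ext_loc f g n). Qed.

Lemma sum_n_C_shift (f : nat -> C) n :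
  sum_n f (S n) = f O + sum_n (fun k => f (S k)) n :> C.
Proof.
  induction n as [|n IH].
  - rewrite sum_n_C_S, !sum_O. reflexivity.
  - rewrite sum_n_C_S, IH, sum_n_C_S. ring.
Qed.

Lemma RtoC_INR_S n : RtoC (INR (S n)) = INR n + 1.
Proof. rewrite S_INR, RtoC_plus. reflexivity. Qed.

Lemma RtoC_INR_sub n k : (k <= n)%nat -> RtoC (INR (n - k)) = INR n - INR k.
Proof. intros Hk. rewrite minus_INR by exact Hk. apply RtoC_minus. Qed.

Lemma RtoC_INR_fact_S n : RtoC (INR (fact (S n))) = INR (S n) * INR (fact n).
Proof. rewrite fact_simpl, mult_INR, RtoC_mult. reflexivity. Qed.

Lemma RtoC_neq0 (x : R) : x <> 0%R -> RtoC x <> 0.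
Proof. intros Hx H. apply Hx. injection H. auto. Qed.

Lemma INR_S_C_neq0 n : RtoC (INR (S n)) <> 0.
Proof. apply RtoC_neq0, not_0_INR. lia. Qed.

Lemma INR_fact_C_neq0 n : RtoC (INR (fact n)) <> 0.
Proof. apply RtoC_neq0, INR_fact_neq_0. Qed.

Lemma Cmod_INR n : Cmod (INR n) = INR n.
Proof. rewrite Cmod_R. apply Rabs_pos_eq, pos_INR. Qed.

Definition cauchy_coef (f g : nat -> C) (n : nat) : C :=
  @sum_n C_AbelianMonoid (fun k => f k * g (n - k)%nat) n.

Definition deriv_coef (f : nat -> C) (k : nat) : C := INR (S k) * f (S k).

Lemma cauchy_coef_index_l (f g : nat -> C) n :
  cauchy_coef (fun k => INR k * f k) g (S n) = cauchy_coef (deriv_coef f) g n.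
Proof.
  unfold cauchy_coef, deriv_coef. rewrite sum_n_C_shift.
  change (INR 0) with 0%R. rewrite !Cmult_0_l, Cplus_0_l.
  reflexivity.
Qed.

Lemma cauchy_coef_index_r (f g : nat -> C) n :
  cauchy_coef f (fun j => INR j * g j) (S n) = cauchy_coef f (deriv_coef g) n.
Proof.
  unfold cauchy_coef, deriv_coef. rewrite sum_n_C_S, Nat.sub_diag.
  change (INR 0) with 0%R. rewrite Cmult_0_l, Cmult_0_r, Cplus_0_r.
  apply sum_n_C_ext_loc. intros k Hk.
  replace (S n - k)%nat with (S (n - k)) by lia. reflexivity.
Qed.

Section CauchyCoefRecurrence.

Variables (al be : nat -> C) (a c q : C).
Hypothesis al_rec : forall k, INR (S k) * (c + INR k) * al (S k) = (a + INR k) * al k.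
Hypothesis be_rec : forall j, deriv_coef be j = q * be j.

Let W := cauchy_coef al be.

Lemma cauchy_coef_rec m (n := S m) :
  INR (S n) * (c + INR n) * W (S n)
  = (a + q * (c + 2 * INR n) + INR n) * W n - q * (q + 1) * W m.
Proof.
  (* (n+1)(n+c) = k(k+c-1) + (n+1-k)(n+k+c) *)
  assert (split :
    INR (S n) * (c + INR n) * W (S n)
    = cauchy_coef (fun k => INR k * ((c + INR k - 1) * al k)) be (S n)
      + cauchy_coef (fun k => (c + INR n + INR k) * al k) (fun j => INR j * be j) (S n)).
  { unfold W, cauchy_coef. rewrite <- sum_n_C_plus, <- sum_n_C_mult_l.
    apply sum_n_C_ext_loc. intros k Hk.
    rewrite RtoC_INR_sub by exact Hk. rewrite !RtoC_INR_S. ring. }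
  assert (al_deriv :
    forall k, deriv_coef (fun k => (c + INR k - 1) * al k) k = (a + INR k) * al k).
  { intros k. rewrite <- al_rec. unfold deriv_coef. rewrite RtoC_INR_S. ring. }
  assert (shifted : q * W m = cauchy_coef al (fun j => INR j * be j) n).
  { unfold n. rewrite cauchy_coef_index_r. unfold W, cauchy_coef.
    rewrite <- sum_n_C_mult_l. apply sum_n_C_ext_loc. intros k _.
    rewrite be_rec. ring. }
  rewrite split, cauchy_coef_index_l, cauchy_coef_index_r.
  transitivity ((a + q * (c + 2 * INR n) + INR n) * W n - (q + 1) * (q * W m)); [|ring].
  rewrite shifted. unfold W, cauchy_coef. rewrite <- sum_n_C_plus.
  transitivity (sum_n (fun k => (a + q * (c + 2 * INR n) + INR n) * (al k * be (n - k)%nat)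
                  + - (q + 1) * (al k * (INR (n - k) * be (n - k)%nat))) n).
  - apply sum_n_C_ext_loc. intros k Hk.
    rewrite al_deriv, be_rec, RtoC_INR_sub by exact Hk. ring.
  - rewrite sum_n_C_plus, !sum_n_C_mult_l. ring.
Qed.

End CauchyCoefRecurrence.

Section KummerCoefficients.

Variables (a c : C).
Hypothesis hc : forall n : nat, c <> - INR n.

Lemma c_plus_INR_neq0 n : c + INR n <> 0.
Proof.
  intros H. apply (hc n).
  replace c with ((c + INR n) - INR n) by ring. rewrite H. ring.
Qed.

Lemma poch_neq0 n : poch c n <> 0.
Proof.
  induction n as [|n IH]; simpl.
  - apply RtoC_neq0. lra.
  - apply Cmult_neq_0; [exact IH | apply c_plus_INR_neq0].
Qed.

Definition kummer_coef (k : nat) : C := poch a k / (poch c k * INR (fact k)).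

Lemma kummer_coef_rec k :
  INR (S k) * (c + INR k) * kummer_coef (S k) = (a + INR k) * kummer_coef k.
Proof.
  unfold kummer_coef. rewrite RtoC_INR_fact_S. simpl poch.
  pose proof (poch_neq0 k). pose proof (c_plus_INR_neq0 k).
  pose proof (INR_fact_C_neq0 k). pose proof (INR_S_C_neq0 k).
  field. repeat split; assumption.
Qed.

Lemma kummer_term_S z n :
  kummer_coef (S n) * z ^ S n
  = kummer_coef n * z ^ n * ((a + INR n) * z / ((c + INR n) * INR (S n))).
Proof.
  pose proof (c_plus_INR_neq0 n). pose proof (INR_S_C_neq0 n).
  replace (kummer_coef (S n))
    with (INR (S n) * (c + INR n) * kummer_coef (S n) / ((c + INR n) * INR (S n)))
    by (field; split; assumption).
  rewrite kummer_coef_rec, Cpow_S. field. split; assumption.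
Qed.

End KummerCoefficients.

Definition exp_coef (q : C) (j : nat) : C := q ^ j / INR (fact j).

Lemma exp_coef_deriv q j : deriv_coef (exp_coef q) j = q * exp_coef q j.
Proof.
  unfold deriv_coef, exp_coef. rewrite RtoC_INR_fact_S. simpl Cpow.
  pose proof (INR_fact_C_neq0 j). pose proof (INR_S_C_neq0 j).
  field. split; assumption.
Qed.

Definition kummer_exp_coef (a c q : C) : nat -> C :=
  cauchy_coef (kummer_coef a c) (exp_coef q).

Lemma kummer_exp_coef_0 a c q : kummer_exp_coef a c q 0 = 1.
Proof.
  unfold kummer_exp_coef, cauchy_coef, kummer_coef, exp_coef.
  rewrite sum_O. simpl. change (INR 1) with 1%R. field.
Qed.

Lemma kummer_exp_coef_1 a c q (hc : forall n : nat, c <> - INR n) :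
  kummer_exp_coef a c q 1 = a / c + q.
Proof.
  unfold kummer_exp_coef, cauchy_coef, kummer_coef, exp_coef.
  rewrite sum_n_C_S, sum_O. simpl. change (INR 1) with 1%R. change (INR 0) with 0%R.
  pose proof (c_plus_INR_neq0 c hc 0) as Hc. change (INR 0) with 0%R in Hc.
  rewrite Cplus_0_r in Hc. field. exact Hc.
Qed.

Lemma kummer_exp_coef_rec a c q (hc : forall n : nat, c <> - INR n) n : (1 <= n)%nat ->
  kummer_exp_coef a c q (S n)
  = (a + q * (c + 2 * INR n) + INR n) / (INR (n + 1) * (c + INR n)) * kummer_exp_coef a c q n
    - q * (q + 1) / (INR (n + 1) * (c + INR n)) * kummer_exp_coef a c q (n - 1).
Proof.
  intros Hn. destruct n as [|m]; [lia|].
  pose proof (cauchy_coef_rec _ _ a c q (kummer_coef_rec a c hc) (exp_coef_deriv q) m) as E.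
  fold (kummer_exp_coef a c q) in E.
  rewrite Nat.add_1_r. simpl (S m - 1)%nat. rewrite Nat.sub_0_r.
  pose proof (c_plus_INR_neq0 c hc (S m)). pose proof (INR_S_C_neq0 (S m)).
  set (D := INR (S (S m)) * (c + INR (S m))).
  transitivity (D * kummer_exp_coef a c q (S (S m)) / D).
  - unfold D. field. split; assumption.
  - unfold D. rewrite E. field. split; assumption.
Qed.

Lemma rec3_unique x0 x1 (A B : nat -> C) (w : nat -> C) :
  w 0%nat = x0 -> w 1%nat = x1 ->
  (forall n, (1 <= n)%nat -> w (S n) = A n * w n - B n * w (n - 1)%nat) ->
  forall n, rec3 x0 x1 A B n = w n.
Proof.
  intros H0 H1 HS.
  assert (pair : forall n, rec_pair x0 x1 A B n = (w n, w (S n))).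
  { induction n as [|n IH]; simpl.
    - rewrite H0, H1. reflexivity.
    - rewrite IH, (HS (S n)) by lia. simpl (S n - 1)%nat. rewrite Nat.sub_0_r.
      reflexivity. }
  intros n. unfold rec3. rewrite pair. reflexivity.
Qed.

Lemma u_seq_eq a c p (hc : forall n : nat, c <> - INR n) n :
  u_seq a c p n = kummer_exp_coef a c p n.
Proof.
  apply rec3_unique.
  - apply kummer_exp_coef_0.
  - apply kummer_exp_coef_1, hc.
  - intros m Hm. apply kummer_exp_coef_rec; assumption.
Qed.

Lemma v_seq_eq a c p (hc : forall n : nat, c <> - INR n) n :
  v_seq a c p n = kummer_exp_coef a c (- p) n.
Proof.
  apply rec3_unique.
  - apply kummer_exp_coef_0.
  - rewrite kummer_exp_coef_1 by exact hc. ring.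
  - intros m Hm. rewrite kummer_exp_coef_rec by assumption.
    unfold Cdiv. ring.
Qed.

Lemma Re_sum_n (h : nat -> C) n : Re (sum_n h n) = sum_n (fun k => Re (h k)) n.
Proof.
  induction n as [|n IH].
  - now rewrite !sum_O.
  - rewrite !sum_Sn, <- IH. reflexivity.
Qed.

Lemma Im_sum_n (h : nat -> C) n : Im (sum_n h n) = sum_n (fun k => Im (h k)) n.
Proof.
  induction n as [|n IH].
  - now rewrite !sum_O.
  - rewrite !sum_Sn, <- IH. reflexivity.
Qed.

Lemma is_series_C_parts (h : nat -> C) (lr li : R) :
  is_series (fun n => Re (h n)) lr -> is_series (fun n => Im (h n)) li ->
  is_series h (lr, li).
Proof.
  intros Hr Hi. unfold is_series in *.
  apply filterlim_locally. intros eps.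
  apply (filterlim_locally _ lr) with (eps := eps) in Hr.
  apply (filterlim_locally _ li) with (eps := eps) in Hi.
  generalize (filter_and _ _ Hr Hi). apply filter_imp. intros n [Hrn Hin].
  rewrite <- Re_sum_n in Hrn. rewrite <- Im_sum_n in Hin.
  split; assumption.
Qed.

Lemma ex_series_Rabs_Re (h : nat -> C) :
  ex_series (fun n => Cmod (h n)) -> ex_series (fun n => Rabs (Re (h n))).
Proof.
  intros H.
  apply (ex_series_le (K := R_AbsRing) (V := R_CompleteNormedModule) _ (fun n => Cmod (h n)));
    [intros n | exact H].
  change (Rabs (Rabs (Re (h n))) <= Cmod (h n))%R.
  rewrite Rabs_Rabsolu. apply re_le_Cmod.
Qed.

Lemma ex_series_Rabs_Im (h : nat -> C) :
  ex_series (fun n => Cmod (h n)) -> ex_series (fun n => Rabs (Im (h n))).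
Proof.
  intros H.
  apply (ex_series_le (K := R_AbsRing) (V := R_CompleteNormedModule) _ (fun n => Cmod (h n)));
    [intros n | exact H].
  change (Rabs (Rabs (Im (h n))) <= Cmod (h n))%R.
  rewrite Rabs_Rabsolu. eapply Rle_trans; [apply Rmax_r | apply Rmax_Cmod].
Qed.

Lemma is_series_cauchy_coef (f g : nat -> C) :
  ex_series (fun n => Cmod (f n)) -> ex_series (fun n => Cmod (g n)) ->
  is_series (cauchy_coef f g) (CSeries f * CSeries g).
Proof.
  intros Hf Hg.
  assert (mult : forall u v : nat -> R,
    ex_series (fun n => Rabs (u n)) -> ex_series (fun n => Rabs (v n)) ->
    is_series (fun n => sum_f_R0 (fun k => (u k * v (n - k)%nat)%R) n) (Series u * Series v)%R).
  { intros u v Hu Hv. apply is_series_mult; try assumption;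
      apply Series_correct, ex_series_Rabs; assumption. }
  pose proof (ex_series_Rabs_Re f Hf) as Rf. pose proof (ex_series_Rabs_Im f Hf) as If.
  pose proof (ex_series_Rabs_Re g Hg) as Rg. pose proof (ex_series_Rabs_Im g Hg) as Ig.
  unfold CSeries. simpl. apply is_series_C_parts.
  - eapply is_series_ext; [|exact (is_series_minus _ _ _ _ (mult _ _ Rf Rg) (mult _ _ If Ig))].
    intros n. unfold cauchy_coef. rewrite Re_sum_n, sum_n_Reals.
    unfold plus, opp; simpl. rewrite minus_sum. reflexivity.
  - eapply is_series_ext; [|exact (is_series_plus _ _ _ _ (mult _ _ Rf Ig) (mult _ _ If Rg))].
    intros n. unfold cauchy_coef. rewrite Im_sum_n, sum_n_Reals.
    unfold plus; simpl. rewrite <- plus_sum. reflexivity.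
Qed.

Lemma ex_series_ratio_le (b : nat -> R) (r : R) (N : nat) :
  (0 <= r < 1)%R -> (forall n, 0 <= b n)%R ->
  (forall n, (N <= n)%nat -> b (S n) <= r * b n)%R -> ex_series b.
Proof.
  intros Hr Hpos Hratio. apply (ex_series_incr_n b N).
  assert (Hgeom : forall k, (b (N + k)%nat <= b N * r ^ k)%R).
  { induction k as [|k IH].
    - rewrite Nat.add_0_r. simpl. lra.
    - rewrite Nat.add_succ_r. eapply Rle_trans; [apply Hratio; lia|]. simpl. nra. }
  apply (ex_series_le (K := R_AbsRing) (V := R_CompleteNormedModule) _
           (fun k => b N * r ^ k)%R).
  - intros k. change (Rabs (b (N + k)%nat) <= b N * r ^ k)%R.
    rewrite Rabs_pos_eq by apply Hpos. apply Hgeom.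
  - apply (ex_series_scal_l (K := R_AbsRing) (V := R_NormedModule) (b N) (fun k => r ^ k)%R).
    apply ex_series_geom. rewrite Rabs_pos_eq; lra.
Qed.

Lemma ex_series_Cmod_exp (x : C) : ex_series (fun n => Cmod (x ^ n / INR (fact n))).
Proof.
  eapply ex_series_ext; [|eexists; exact (is_exp_Reals (Cmod x))].
  intros n. rewrite Cmod_div by apply INR_fact_C_neq0.
  rewrite Cmod_pow, Cmod_INR.
  unfold scal; simpl. unfold mult; simpl. rewrite pow_n_pow. unfold Rdiv. ring.
Qed.

Lemma Cmod_kummer_ratio_le a c z n :
  (2 * Cmod c + 4 * Cmod z * (Cmod a + 1) + 1 <= INR n)%R ->
  (Cmod ((a + INR n) * z / ((c + INR n) * INR (S n))) <= / 2)%R.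
Proof.
  intros Hn.
  pose proof (Cmod_ge_0 a) as Ha. pose proof (Cmod_ge_0 c) as Hc.
  pose proof (Cmod_ge_0 z) as Hz. pose proof (pos_INR n) as Hn0.
  assert (Haz : (0 <= Cmod z * (Cmod a + 1))%R) by (apply Rmult_le_pos; lra).
  assert (Hupper : (Cmod (a + INR n) <= Cmod a + INR n)%R).
  { rewrite <- (Cmod_INR n) at 2. apply Cmod_triangle. }
  assert (Hlower : (INR n - Cmod c <= Cmod (c + INR n))%R).
  { pose proof (Cmod_triangle (c + INR n) (- c)) as T.
    replace (c + INR n + - c) with (RtoC (INR n)) in T by ring.
    rewrite Cmod_INR, Cmod_opp in T. lra. }
  assert (Hpos : (0 < Cmod (c + INR n))%R) by lra.
  assert (Hcn : c + INR n <> 0).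
  { intros E. rewrite E, Cmod_0 in Hpos. lra. }
  rewrite Cmod_div, !Cmod_mult, Cmod_INR, S_INR
    by (apply Cmult_neq_0; [exact Hcn | apply INR_S_C_neq0]).
  apply Rle_div_l; [apply Rmult_lt_0_compat; lra|].
  assert (Hnum : (Cmod (a + INR n) * Cmod z <= (Cmod a + 1) * Cmod z * (INR n + 1))%R).
  { assert (0 <= Cmod z * (Cmod a * INR n + 1))%R
      by (apply Rmult_le_pos; [lra | pose proof (Rmult_le_pos _ _ Ha Hn0); lra]).
    apply Rle_trans with ((Cmod a + INR n) * Cmod z)%R; [|nra].
    apply Rmult_le_compat_r; assumption. }
  nra.
Qed.

Lemma ex_series_Cmod_kummer a c z (hc : forall n : nat, c <> - INR n) :
  ex_series (fun n => Cmod (kummer_coef a c n * z ^ n)).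
Proof.
  destruct (INR_unbounded (2 * Cmod c + 4 * Cmod z * (Cmod a + 1) + 1)) as [N HN].
  apply (ex_series_ratio_le _ (/ 2) N); [lra | intros; apply Cmod_ge_0 |].
  intros n Hn. rewrite kummer_term_S, Cmod_mult by exact hc.
  rewrite Rmult_comm. apply Rmult_le_compat_r; [apply Cmod_ge_0|].
  apply Cmod_kummer_ratio_le. apply Rlt_le, Rlt_le_trans with (INR N); [exact HN|].
  apply le_INR, Hn.
Qed.

Lemma is_series_kummer_exp a c q z (hc : forall n : nat, c <> - INR n) :
  is_series (fun n => kummer_exp_coef a c q n * z ^ n) (kummerM a c z * cexp (q * z)).
Proof.
  eapply is_series_ext;
    [|exact (is_series_cauchy_coef _ _ (ex_series_Cmod_kummer a c z hc)
                                       (ex_series_Cmod_exp (q * z)))].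
  intros n. symmetry. unfold kummer_exp_coef, cauchy_coef.
  rewrite Cmult_comm, <- sum_n_C_mult_l. apply sum_n_C_ext_loc. intros k Hk.
  unfold exp_coef. rewrite Cpow_mult_l.
  replace (z ^ n) with (z ^ k * z ^ (n - k)) by (rewrite <- Cpow_add_r; f_equal; lia).
  unfold Cdiv. ring.
Qed.

Theorem theorem2p2 (a c p : C) (hc : forall n : nat, c <> - INR n) (z : C) :
  is_series (fun n : nat => (u_seq a c p n - v_seq a c p n) / 2 * z ^ n)
            (csinh (p * z) * kummerM a c z).
Proof.
  pose proof (is_series_scal_l (/ 2) _ _
    (is_series_minus _ _ _ _ (is_series_kummer_exp a c p z hc)
                             (is_series_kummer_exp a c (- p) z hc))) as H.
  replace (csinh (p * z) * kummerM a c z)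
    with (scal (/ 2) (plus (kummerM a c z * cexp (p * z))
                           (opp (kummerM a c z * cexp (- p * z))))).
  - eapply is_series_ext; [|exact H]. intros n.
    rewrite u_seq_eq, v_seq_eq by exact hc.
    unfold scal, plus, opp; simpl. unfold mult; simpl. field.
  - unfold csinh. replace (- (p * z)) with (- p * z) by ring.
    unfold scal, plus, opp; simpl. unfold mult; simpl. field.
Qed.
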